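(* Let $r\ge0$ and let $P$ be a finite nonempty subset of $\mathbb{R}$ with $m=\min(P)$. Then \[\mathrm{AR}_r(P)\simeq\bigvee_{p\in P,\ m<p\le m+r}\mathrm{susp}\bigl(\mathrm{AR}_r(\{q\in P\mid q>p+r\})\bigr).\]
   Context: For a subset $P$ of a metric space with metric $d$ and $r\ge0$, the anti-Rips complex $\mathrm{AR}_r(P)$ is the simplicial complex with vertex set $P$ whose simplices are the finite subsets of $P$ in which any two distinct points $p,q$ satisfy $d(p,q)>r$; on $\mathbb{R}$, $d(p,q)=|p-q|$. $\mathrm{AR}_r(\emptyset)$ is the empty complex, $\mathrm{susp}(\emptyset)=S^0$, and a wedge over an empty index set is a point. *)

From HB Require Import structures.
From mathcomp Require Import all_boot all_order all_algebra finmap.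
From mathcomp Require Import all_classical all_reals all_analysis.
Set Implicit Arguments. Unset Strict Implicit. Unset Printing Implicit Defensive.
Import Order.TTheory GRing.Theory Num.Theory.
Import numFieldNormedType.Exports.
Local Open Scope classical_set_scope.
Local Open Scope ring_scope.

Definition complex (V : choiceType) := {fset V} -> Prop.

Definition AR {R : realType} (r : R) (P : {fset R}) : complex R :=
  fun s => (s `<=` P)%fset /\
    (forall p q, p \in s -> q \in s -> p != q -> r < `|p - q|).

(* simplicial suspension: two cone vertices inr true (north), inr false (south).
   susp (empty complex) = S^0. *)
Definition susp {V : choiceType} (K : complex V) : complex ((V + bool)%type) :=
  fun t => exists s (c : {fset (V + bool)%type}), K s /\
    (c = fset0%fset \/ c = [fset inr true]%fset \/ c = [fset inr false]%fset) /\
    t = ([fset (inl x : (V + bool)%type) | x in s]%fset `|` c)%fset.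

(* wedge of the complexes K i (i in J), all glued at the common vertex b;
   the glued vertex is None.  Over an empty index set it is a point. *)
Definition wedge {I V : choiceType} (J : {fset I}) (b : V) (K : I -> complex V)
  : complex (option (I * V)) :=
  fun t => (t `<=` [fset None]%fset)%fset \/
    exists i s, i \in J /\ K i s /\
      t = [fset (if v == b then None else Some (i, v)) | v in s]%fset.

Definition realization {R : realType} {V : choiceType} (K : complex V)
  : set {ptws V -> R} :=
  [set t | exists s : {fset V}, K s /\ (forall v, v \notin s -> t v = 0) /\
     (forall v, 0 <= t v) /\ \sum_(v <- s) t v = 1].

Definition homotopic {R : realType} {X Y : topologicalType} (A : set X) (B : set Y)
  (f g : X -> Y) : Prop :=
  exists H : (X * R)%type -> Y,
    {within A `*` [set s : R | 0 <= s <= 1], continuous H} /\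
    (forall x s, A x -> 0 <= s <= 1 -> B (H (x, s))) /\
    (forall x, A x -> H (x, 0) = f x /\ H (x, 1) = g x).

Definition homotopy_equiv (R : realType) {X Y : topologicalType} (A : set X) (B : set Y)
  : Prop :=
  exists (f : X -> Y) (g : Y -> X),
    {within A, continuous f} /\ {within B, continuous g} /\
    (forall x, A x -> B (f x)) /\ (forall y, B y -> A (g y)) /\
    @homotopic R _ _ A A (g \o f) id /\ @homotopic R _ _ B B (f \o g) id.

From HB Require Import structures.
From mathcomp Require Import all_boot all_order all_algebra finmap.
From mathcomp Require Import all_classical all_reals all_analysis.
From mathcomp Require Import ring lra.
Set Implicit Arguments. Unset Strict Implicit. Unset Printing Implicit Defensive.
Import Order.TTheory GRing.Theory Num.Theory.
Import numFieldNormedType.Exports.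
Local Open Scope classical_set_scope.
Local Open Scope ring_scope.

(* Both complexes have an apex c and a set A of pivot vertices such that every
   simplex contains at most one pivot, no simplex contains a pivot together with
   c, and c may be added to a simplex without pivot or exchanged for its pivot:
   in AR_r(P) take c = m and A = P ∩ (m, m + r], in the wedge take the wedge
   point and the south poles.  The realization of such a complex deforms onto
   itself by replacing the weight b of the pivot with a signed weight running
   from b to max(2b - 1, -(1 - 2b)^2), whose positive part stays on the pivot
   and whose negative part goes to c.
   A simplex of AR_r(P) through the pivot p consists, besides p, of points
   beyond p + r, i.e. of a simplex of AR_r({q in P | q > p + r}); this is how
   AR_r(P) is mapped into the p-th suspension.  In the other direction the
   simplicial map sends the south pole of p to p and the wedge point to m.  Both
   composites are the end of the deformation above, hence homotopic to the
   identity. *)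

Lemma continuous_ptws {T K : topologicalType} {U : Type} (F : T -> {ptws U -> K}) :
  (forall u, continuous (fun x => F x u)) -> continuous F.
Proof.
move=> Fc x; apply/cvg_sup => u A /= [_ [[B Bop <-] BFu BA]].
have FuB : nbhs (F x u) B by rewrite nbhsE; exists B.
have := Fc u x B FuB; rewrite nbhs_simpl /=.
by apply: filterS => y /BA.
Qed.

Lemma continuous_sum {T : topologicalType} {K : numFieldType} {V : normedModType K}
    (I : Type) (s : seq I) (F : I -> T -> V) :
  (forall i, continuous (F i)) -> continuous (fun x => \sum_(i <- s) F i x).
Proof.
move=> Fc; elim: s => [|i s IH].
  by under eq_fun do rewrite big_nil; exact: cst_continuous.
by under eq_fun do rewrite big_cons; move=> x; apply: cvgD; [exact: Fc | exact: IH].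
Qed.

(* Global forms of [continuousN], [continuousD], ...: applying them at the
   product spaces below is much cheaper than unifying [cvgD] there. *)
Section continuous_arith.
Context {R : realType} {T : topologicalType} {f g : T -> R}.
Hypotheses (fc : continuous f) (gc : continuous g).

Lemma continuous_opp : continuous (fun x => - f x).
Proof. by move=> x; apply: cvgN; exact: fc. Qed.

Lemma continuous_add : continuous (fun x => f x + g x).
Proof. by move=> x; apply: cvgD; [exact: fc | exact: gc]. Qed.

Lemma continuous_mul : continuous (fun x => f x * g x).
Proof. by move=> x; apply: cvgM; [exact: fc | exact: gc]. Qed.

Lemma continuous_maxr : continuous (fun x => Num.max (f x) (g x)).
Proof. by move=> x; apply: (@continuous_max R T f g x); [exact: fc | exact: gc]. Qed.

Lemma continuous_minr : continuous (fun x => Num.min (f x) (g x)).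
Proof. by move=> x; apply: (@continuous_min R T f g x); [exact: fc | exact: gc]. Qed.

End continuous_arith.

Section fold_profile.
Context {R : realType}.
Implicit Types b s : R.

(* At time s the pivot weight b becomes [pivot b s], from [b] at s = 1 to
   [pivot0 b] at s = 0; the other vertices are scaled by [spread b s] so that the
   total weight stays 1.  Capping b at 1/2 in [spread] avoids the division by 0
   at b = 1 without changing the value elsewhere. *)
Definition pivot0 b : R := Num.max (2 * b - 1) (- ((1 - 2 * b) * (1 - 2 * b))).
Definition pivot b s : R := (1 - s) * pivot0 b + s * b.
Definition spread b s : R :=
  (1 - `|pivot (Num.min b 2^-1) s|) / (1 - Num.min b 2^-1).
Definition spread0 b : R := 2 * Num.min (2 * b) 1.

Lemma pivot0_small b : 0 <= b <= 2^-1 -> pivot0 b = - ((1 - 2 * b) * (1 - 2 * b)).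
Proof. by move=> /andP[b0 b2]; apply/max_idPr; nra. Qed.

Lemma pivot0_large b : 2^-1 <= b -> pivot0 b = 2 * b - 1.
Proof. by move=> b2; apply/max_idPl; nra. Qed.

Lemma pivot0_b0 : pivot0 0 = -1.
Proof. by rewrite pivot0_small ?lexx ?invr_ge0 ?ler0n //; lra. Qed.

Lemma pivot0_pos b : Num.max (pivot0 b) 0 = Num.max (2 * b - 1) 0.
Proof.
have sq_ge0 : - ((1 - 2 * b) * (1 - 2 * b)) <= 0 by rewrite oppr_le0 -expr2 sqr_ge0.
rewrite /pivot0; case: (lerP 0 (2 * b - 1)) => b2.
  by rewrite (max_idPl (le_trans sq_ge0 b2)); apply/max_idPl.
by apply/max_idPr; rewrite ge_max sq_ge0 ltW.
Qed.

Lemma pivot_s0 b : pivot b 0 = pivot0 b.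
Proof. by rewrite /pivot; lra. Qed.

Lemma pivot_s1 b : pivot b 1 = b.
Proof. by rewrite /pivot; lra. Qed.

Lemma pivot_b0 s : pivot 0 s = s - 1.
Proof. by rewrite /pivot pivot0_small; lra. Qed.

Lemma pivot_bounded b s : 0 <= b <= 1 -> 0 <= s <= 1 -> `|pivot b s| <= 1.
Proof.
move=> /andP[b0 b1] /andP[s0 s1]; rewrite ler_norml /pivot.
case: (lerP b 2^-1) => b2.
  by rewrite pivot0_small; [apply/andP; split; nra | lra].
by rewrite pivot0_large; [apply/andP; split; nra | lra].
Qed.

Lemma spread_small b s : b <= 2^-1 -> spread b s = (1 - `|pivot b s|) / (1 - b).
Proof. by move=> b2; rewrite /spread (min_idPl b2). Qed.

Lemma spread_large b s : 0 <= s -> 2^-1 <= b -> spread b s = 2 - s.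
Proof.
move=> s0 b2; rewrite /spread (min_idPr b2) /pivot pivot0_large // ger0_norm; last lra.
by apply: (@mulIf _ (1 - 2^-1)); [lra | rewrite mulfVK; lra].
Qed.

Lemma spread_b0 s : 0 <= s <= 1 -> spread 0 s = s.
Proof.
move=> /andP[s0 s1]; rewrite spread_small; last lra.
rewrite pivot_b0 ler0_norm; last lra.
by rewrite oppr0 addr0 divr1; lra.
Qed.

Lemma spread_s0 b : 0 <= b -> spread b 0 = spread0 b.
Proof.
move=> b0; rewrite /spread0; case: (lerP b 2^-1) => b2.
  rewrite spread_small // pivot_s0 pivot0_small; last by apply/andP.
  rewrite ler0_norm; last nra.
  rewrite (min_idPl _); last lra.
  by apply: (@mulIf _ (1 - b)); [lra | rewrite mulfVK; [nra | lra]].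
by rewrite spread_large; [rewrite (min_idPr _); lra | lra | lra].
Qed.

Lemma spread_s1 b : 0 <= b <= 1 -> spread b 1 = 1.
Proof.
move=> /andP[b0 b1]; case: (lerP b 2^-1) => b2; last by rewrite spread_large; lra.
by rewrite spread_small // pivot_s1 ger0_norm // divff //; lra.
Qed.

Lemma spread_mass b s : 0 <= b <= 1 -> 0 <= s <= 1 ->
  spread b s * (1 - b) = 1 - `|pivot b s|.
Proof.
move=> /andP[b0 b1] /andP[s0 s1]; case: (lerP b 2^-1) => b2.
  by rewrite spread_small // mulfVK //; lra.
rewrite spread_large //; last lra.
by rewrite /pivot pivot0_large ?ger0_norm; nra.
Qed.

Lemma spread_ge0 b s : 0 <= b <= 1 -> 0 <= s <= 1 -> 0 <= spread b s.
Proof.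
move=> b01 s01; case/andP: (b01) => b0 b1; case/andP: (s01) => s0 s1.
case: (lerP b 2^-1) => b2; last by rewrite spread_large; lra.
by rewrite spread_small // divr_ge0 ?subr_ge0 ?pivot_bounded //; lra.
Qed.

Lemma spread0_b0 : spread0 0 = 0.
Proof. by rewrite /spread0 mulr0 (min_idPl _) ?mulr0 //; lra. Qed.

Lemma spread0_ge0 b : 0 <= b -> 0 <= spread0 b.
Proof. by move=> b0; apply: mulr_ge0 => //; rewrite le_min ler01 andbT; lra. Qed.

Section continuity.
Context {T : topologicalType} {f g : T -> R}.
Hypotheses (fc : continuous f) (gc : continuous g).

Let twice : continuous (fun x => 2 * f x) := continuous_mul (cst_continuous (x := (2 : R))) fc.

Lemma pivot0_continuous : continuous (fun x => pivot0 (f x)).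
Proof.
have up := continuous_add twice (cst_continuous (x := (- 1 : R))).
have down := continuous_add (cst_continuous (x := (1 : R))) (continuous_opp twice).
exact: continuous_maxr up (continuous_opp (continuous_mul down down)).
Qed.

Lemma pivot_continuous : continuous (fun x => pivot (f x) (g x)).
Proof.
have rev := continuous_add (cst_continuous (x := (1 : R))) (continuous_opp gc).
exact: continuous_add (continuous_mul rev pivot0_continuous) (continuous_mul gc fc).
Qed.

Lemma spread0_continuous : continuous (fun x => spread0 (f x)).
Proof.
have capped := continuous_minr twice (cst_continuous (x := (1 : R))).
exact: continuous_mul (cst_continuous (x := (2 : R))) capped.
Qed.

End continuity.

Lemma spread_continuous {T : topologicalType} {f g : T -> R} :
  continuous f -> continuous g -> continuous (fun x => spread (f x) (g x)).
Proof.
move=> fc gc; have hc := continuous_minr fc (cst_continuous (x := (2^-1 : R))).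
have pc := pivot_continuous hc gc.
move=> x; apply: cvgM.
  by apply: cvgB; [exact: cvg_cst | apply: cvg_norm; exact: pc].
apply: cvgV; last by apply: cvgB; [exact: cvg_cst | exact: hc].
have : Num.min (f x) 2^-1 <= 2^-1 by rewrite ge_min lexx orbT.
by move=> hx; apply/eqP => h0; lra.
Qed.

End fold_profile.

Section simplex.
Context {R : realType} {V : choiceType}.

Definition in_simplex (S : {fset V}) (t : V -> R) : Prop :=
  [/\ forall v, v \notin S -> t v = 0, forall v, 0 <= t v & \sum_(v <- S) t v = 1].

Lemma realizationP (K : complex V) (t : V -> R) :
  realization K t <-> exists2 S, K S & in_simplex S t.
Proof.
by split=> [[S [KS [t0 [tge0 t1]]]] | [S KS [t0 tge0 t1]]]; exists S.
Qed.

Lemma in_simplex_le1 S t v : in_simplex S t -> t v <= 1.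
Proof.
case=> t0 tge0 t1; case: (boolP (v \in S)) => vS; last by rewrite t0.
move: t1; rewrite (big_fsetD1 v) //= => t1.
have : 0 <= \sum_(u <- (S `\ v)%fset) t u by apply: sumr_ge0.
lra.
Qed.

Lemma in_simplex_sumD1 S t x : in_simplex S t -> \sum_(v <- (S `\ x)%fset) t v = 1 - t x.
Proof.
case=> t0 _ t1; case: (boolP (x \in S)) => xS.
  by move: t1; rewrite (big_fsetD1 x) //=; lra.
by rewrite mem_fsetD1 // t1 t0 // subr0.
Qed.

Lemma big_fset1U (S : {fset V}) (f : V -> R) c :
  \sum_(v <- (c |` S)%fset) f v = f c + \sum_(v <- (S `\ c)%fset) f v.
Proof.
rewrite (big_fsetD1 c) ?fset1U1 //=; congr (_ + _); apply: eq_fbigl => v.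
by rewrite !inE; case: eqP.
Qed.

End simplex.

Section fold.
Context {R : realType} {V : choiceType}.
Variables (F : complex V) (c : V) (A : {fset V}).

Record foldable : Prop := Foldable {
  apex_notin_pivots : c \notin A;
  pivot_uniq : forall s a a', F s -> a \in A -> a' \in A -> a \in s -> a' \in s -> a = a';
  pivot_apex_apart : forall s a, F s -> a \in A -> a \in s -> c \notin s;
  apex_cone : forall s, F s -> (forall a, a \in A -> a \notin s) -> F (c |` s)%fset;
  apex_swap : forall s a, F s -> a \in A -> a \in s -> F (c |` (s `\ a))%fset }.

Arguments pivot_uniq _ {s a a'}.
Arguments pivot_apex_apart _ {s a}.
Arguments apex_cone _ {s}.
Arguments apex_swap _ {s a}.

Definition pivot_mass (t : V -> R) : R := \sum_(a <- A) t a.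

Definition fold (t : V -> R) (s : R) : V -> R := fun v =>
  if v == c then Num.max (- pivot (pivot_mass t) s) 0 + s * t c
  else if v \in A then Num.max (pivot (t v) s) 0
  else spread (pivot_mass t) s * t v.

Lemma fold_continuous :
  continuous (fun p : {ptws V -> R} * R => (fold p.1 p.2 : {ptws V -> R})).
Proof.
have coordc v : continuous (fun p : {ptws V -> R} * R => p.1 v).
  move=> p; apply: (@continuous_comp _ _ _ fst (fun t : {ptws V -> R} => t v)).
    exact: cvg_fst.
  exact: (@proj_continuous V (fun=> R) v).
have timec : continuous (fun p : {ptws V -> R} * R => p.2) by move=> p; exact: cvg_snd.
have massc : continuous (fun p : {ptws V -> R} * R => pivot_mass p.1).
  exact: continuous_sum.
have zero := cst_continuous (T := ({ptws V -> R} * R)%type) (x := (0 : R)).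
apply: continuous_ptws => v; rewrite /fold.
case: (v == c); last case: (v \in A).
- have apex := continuous_maxr (continuous_opp (pivot_continuous massc timec)) zero.
  exact: continuous_add apex (continuous_mul timec (coordc c)).
- exact: continuous_maxr (pivot_continuous (coordc v) timec) zero.
- exact: continuous_mul (spread_continuous massc timec) (coordc v).
Qed.

Hypothesis Ffold : foldable.

Variant pivot_spec (t : V -> R) : Prop :=
  | NoPivot S of F S & in_simplex S t & (forall a, a \in A -> a \notin S)
      & pivot_mass t = 0
  | OnePivot S a of F S & in_simplex S t & a \in A & a \in S & t c = 0
      & pivot_mass t = t a & (forall v, v \in S -> v != a -> v != c /\ v \notin A).

Lemma pivotP t : realization F t -> pivot_spec t.
Proof.
case/realizationP=> S FS St; case: (St) => t0 _ _.
case: (pselect (exists2 a, a \in A & a \in S)) => [[a aA aS]|noA]; last first.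
  have nA a : a \in A -> a \notin S by move=> aA; apply/negP => aS; apply: noA; exists a.
  have m0 : pivot_mass t = 0 by rewrite /pivot_mass big1_fset // => a /nA/t0.
  exact: NoPivot FS St nA m0.
have cS := pivot_apex_apart Ffold FS aA aS.
have other v : v \in S -> v != a -> v != c /\ v \notin A.
  move=> vS va; split; first by apply: contraNneq cS => <-.
  by apply: contra va => vA; rewrite (pivot_uniq Ffold FS vA aA vS aS) eqxx.
have ma : pivot_mass t = t a.
  rewrite /pivot_mass (big_fsetD1 a) //= big1_fset ?addr0 // => v /fsetD1P[va vA] _.
  by apply: t0; apply: contra va => vS; rewrite (pivot_uniq Ffold FS vA aA vS aS) eqxx.
exact: OnePivot FS St aA aS (t0 c cS) ma other.
Qed.

Lemma pivot_mass_bounds t : realization F t -> 0 <= pivot_mass t <= 1.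
Proof.
by case/pivotP => [S _ _ _ -> | S a _ St _ _ _ ->]; rewrite ?lexx ?ler01 //;
  case: (St) => _ t0 _; rewrite t0 (in_simplex_le1 _ St).
Qed.

Lemma fold1 t : realization F t -> fold t 1 = t.
Proof.
move=> Ft; have /andP[m0 m1] := pivot_mass_bounds Ft.
case/realizationP: Ft => S _ [_ tge0 _].
apply: funext => v; rewrite /fold !pivot_s1 spread_s1 ?m0 // mul1r.
case: eqP => [->|_]; first by rewrite (max_idPr _) ?add0r //; lra.
by case: (v \in A); [apply/max_idPl | rewrite mul1r].
Qed.

Lemma fold_ge0 t s : (forall v, 0 <= t v) -> 0 <= pivot_mass t <= 1 -> 0 <= s <= 1 ->
  forall v, 0 <= fold t s v.
Proof.
move=> tge0 m01 /andP[s0 s1] v; rewrite /fold.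
case: (v == c); first by rewrite addr_ge0 ?le_max ?lexx ?orbT ?mulr_ge0.
case: (v \in A); first by rewrite le_max lexx orbT.
by rewrite mulr_ge0 // spread_ge0 // s0.
Qed.

Lemma fold_off_face t s S v : s <= 1 -> in_simplex S t -> v \notin S -> v != c ->
  fold t s v = 0.
Proof.
move=> s1 [t0 _ _] vS vc; rewrite /fold (negbTE vc) t0 // mulr0.
by case: (v \in A) => //; rewrite pivot_b0; apply/max_idPr; lra.
Qed.

Lemma fold_realization_nopivot t s S : 0 <= s <= 1 -> F S -> in_simplex S t ->
  (forall a, a \in A -> a \notin S) -> pivot_mass t = 0 -> realization F (fold t s).
Proof.
move=> s01 FS St nA m0; case/andP: (s01) => s0 s1; case: (St) => _ tge0 _.
apply/realizationP; exists (c |` S)%fset; first exact: apex_cone.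
split.
- by move=> v; rewrite in_fset1U negb_or => /andP[vc vS]; apply: fold_off_face s1 St vS vc.
- by apply: fold_ge0; rewrite ?m0 ?lexx ?ler01.
have scaled : \sum_(v <- (S `\ c)%fset) fold t s v = s * \sum_(v <- (S `\ c)%fset) t v.
  rewrite mulr_sumr big_seq [RHS]big_seq; apply: eq_bigr => v /fsetD1P[vc vS].
  have vA : (v \in A) = false by apply/negP => /nA; rewrite vS.
  by rewrite /fold (negbTE vc) vA m0 spread_b0.
rewrite big_fset1U scaled (in_simplex_sumD1 c St) /fold eqxx m0 pivot_b0 (max_idPl _); lra.
Qed.

Lemma fold_realization_pivot t s S a : 0 <= s <= 1 -> F S -> in_simplex S t ->
  a \in A -> a \in S -> t c = 0 -> pivot_mass t = t a ->
  (forall v, v \in S -> v != a -> v != c /\ v \notin A) -> realization F (fold t s).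
Proof.
move=> s01 FS St aA aS tc ma other; case/andP: (s01) => s0 s1; case: (St) => _ tge0 _.
have ac : a != c by apply/eqP => ac; move: (apex_notin_pivots Ffold); rewrite -ac aA.
have cS : c \notin S := pivot_apex_apart Ffold FS aA aS.
have a01 : 0 <= t a <= 1 by rewrite tge0 (in_simplex_le1 a St).
have fge0 : forall v, 0 <= fold t s v by apply: fold_ge0; rewrite ?ma.
pose p := pivot (t a) s.
have fc : fold t s c = Num.max (- p) 0 by rewrite /fold eqxx ma tc mulr0 addr0.
have fa : fold t s a = Num.max p 0 by rewrite /fold (negbTE ac) aA.
have rest : \sum_(v <- (S `\ a)%fset) fold t s v = 1 - `|p|.
  rewrite -(spread_mass a01 s01) -(in_simplex_sumD1 a St) mulr_sumr.
  rewrite big_seq [RHS]big_seq; apply: eq_bigr => v /fsetD1P[va vS].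
  by have [vc vA] := other v vS va; rewrite /fold (negbTE vc) (negbTE vA) ma.
apply/realizationP; case: (lerP 0 p) => p0.
  exists S => //; split=> // [v vS|].
    case: (eqVneq v c) => [->|vc]; last exact: fold_off_face s1 St vS vc.
    by rewrite fc; apply/max_idPr; lra.
  by rewrite (big_fsetD1 a) //= rest fa (max_idPl p0) ger0_norm //; lra.
exists (c |` (S `\ a))%fset; first exact: apex_swap.
split=> // [v|].
  rewrite in_fset1U negb_or in_fsetD1 negb_and negbK => /andP[vc].
  case: (eqVneq v a) => [-> _ | va /= vS]; last exact: fold_off_face s1 St vS vc.
  by rewrite fa; apply/max_idPr; lra.
have cSa : c \notin (S `\ a)%fset by rewrite in_fsetD1 negb_and cS orbT.
by rewrite big_fsetU1 //= rest fc (max_idPl _) ?ltr0_norm //; lra.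
Qed.

Lemma fold_realization t s : realization F t -> 0 <= s <= 1 -> realization F (fold t s).
Proof.
move=> Ft s01; case: (pivotP Ft) => [S FS St nA m0 | S a FS St aA aS tc ma other].
  exact: fold_realization_nopivot St nA m0.
exact: fold_realization_pivot St aA aS tc ma other.
Qed.

Lemma fold_homotopic (f : {ptws V -> R} -> {ptws V -> R}) :
  (forall t, realization F t -> f t = fold t 0) ->
  homotopic (R := R) (realization F) (realization F) f id.
Proof.
move=> f_fold; exists (fun p : {ptws V -> R} * R => (fold p.1 p.2 : {ptws V -> R})).
split; first exact: continuous_subspaceT fold_continuous.
split; first by move=> t s Ft s01; exact: fold_realization.
by move=> t Ft; rewrite f_fold // fold1.
Qed.

End fold.

Section option_sum_eq.
Variables (A B : eqType).

Lemma Some_eq (x y : A) : (Some x == Some y) = (x == y). Proof. by []. Qed.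
Lemma Some_None_eq (x : A) : (Some x == None) = false. Proof. by []. Qed.
Lemma inl_eq (x y : A) : (inl x == inl y :> A + B) = (x == y). Proof. by []. Qed.
Lemma inl_inr_eq (x : A) (y : B) : (inl x == inr y) = false. Proof. by []. Qed.

End option_sum_eq.

Definition option_sum_eqE :=
  (Some_eq, Some_None_eq, xpair_eqE, inl_eq, inl_inr_eq).

Section susp_wedge.
Context {I V : choiceType}.
Local Notation W := (option (I * (V + bool))).

Definition pole (k : option bool) : {fset V + bool} :=
  if k is Some b then [fset inr b]%fset else fset0.

(* [Some true] adds the north pole, glued to the wedge point [None]; [Some false]
   adds the south pole. *)
Definition pole_face (i : I) (k : option bool) : {fset W} :=
  match k with
  | None => fset0
  | Some true => [fset None]%fset
  | Some false => [fset Some (i, inr false)]%fset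
  end.

Definition susp_face (i : I) (s : {fset V}) (k : option bool) : {fset W} :=
  ([fset Some (i, inl v) | v in s] `|` pole_face i k)%fset.

Definition susp_wedge (J : {fset I}) (K : I -> complex V) : complex W := fun T =>
  (T `<=` [fset None])%fset \/ exists i s k, [/\ i \in J, K i s & T = susp_face i s k].

Lemma susp_poleP (K : complex V) T :
  susp K T <-> exists s k, K s /\ T = ([fset inl v | v in s] `|` pole k)%fset.
Proof.
split=> [[s [c [Ks [cE ->]]]] | [s [k [Ks ->]]]].
  by exists s; case: cE => [->|[->|->]]; [exists None | exists (Some true) | exists (Some false)].
exists s, (pole k); split=> //; split=> //.
by case: k => [[]|]; [right; left | right; right | left].
Qed.

Lemma glue_susp_face i s k :
  [fset (if v == inr true then None else Some (i, v)) | v in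
     ([fset inl x | x in s] `|` pole k)%fset]%fset = susp_face i s k.
Proof.
rewrite imfsetU -imfset_comp /susp_face; congr (_ `|` _)%fset.
by case: k => [[]|] /=; rewrite ?imfset0 ?imfset_fset1.
Qed.

Lemma wedge_suspE (J : {fset I}) (K : I -> complex V) :
  wedge J (inr true) (fun i => susp (K i)) = susp_wedge J K.
Proof.
apply: funext => T; apply: propext; split.
  case=> [|[i [t [iJ [/susp_poleP[s [k [Ks ->]]] ->]]]]]; first by left.
  by right; exists i, s, k; rewrite glue_susp_face.
case=> [|[i [s [k [iJ Ks ->]]]]]; first by left.
right; exists i, ([fset inl x | x in s] `|` pole k)%fset; split=> //.
by split; [apply/susp_poleP; exists s, k | rewrite glue_susp_face].
Qed.

Section membership.
Variables (i : I) (s : {fset V}) (k : option bool).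

Lemma notin_susp_face_image u : u \notin [fset Some (i, inl v) | v in s]%fset ->
  (u \in susp_face i s k) = (u \in pole_face i k).
Proof. by rewrite /susp_face in_fsetU => /negbTE ->. Qed.

Lemma in_susp_face_inl j x : (Some (j, inl x) \in susp_face i s k) = (j == i) && (x \in s).
Proof.
rewrite /susp_face in_fsetU; have -> : Some (j, inl x) \in pole_face i k = false.
  by case: k => [[]|]; rewrite ?inE ?option_sum_eqE ?andbF.
rewrite orbF; apply/imfsetP/andP => [[y ys [-> ->]] | [/eqP -> xs]]; last by exists x.
by rewrite eqxx.
Qed.

Lemma in_susp_face_south j :
  (Some (j, inr false) \in susp_face i s k) = (j == i) && (k == Some false).
Proof.
rewrite notin_susp_face_image; last by apply/imfsetP => -[].
by case: k => [[]|]; rewrite ?inE ?option_sum_eqE ?andbT ?andbF.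
Qed.

Lemma in_susp_face_north j : (Some (j, inr true) \in susp_face i s k) = false.
Proof.
rewrite notin_susp_face_image; last by apply/imfsetP => -[].
by case: k => [[]|]; rewrite ?inE ?option_sum_eqE ?andbF.
Qed.

Lemma in_susp_face_apex : (None \in susp_face i s k) = (k == Some true).
Proof.
rewrite notin_susp_face_image; last by apply/imfsetP => -[].
by case: k => [[]|]; rewrite ?inE ?option_sum_eqE.
Qed.

End membership.

Definition in_susp_face :=
  (in_susp_face_inl, in_susp_face_south, in_susp_face_north, in_susp_face_apex).

Lemma big_susp_face {R : realType} i s k (f : W -> R) :
  \sum_(u <- susp_face i s k) f u =
  \sum_(v <- s) f (Some (i, inl v)) + \sum_(u <- pole_face i k) f u.
Proof.
have img : \sum_(u <- [fset Some (i, inl v) | v in s]%fset) f u = \sum_(v <- s) f (Some (i, inl v)).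
  by rewrite big_imfset //= => x y _ _ [].
rewrite /susp_face; case: k => [b|] /=; last by rewrite fsetU0 img big_seq_fset0 addr0.
by case: b; rewrite fsetUC big_fsetU1 /= ?img ?big_seq_fset1 1?addrC //; apply/imfsetP => -[].
Qed.

Lemma susp_wedge_realizationP {R : realType} J K (w : W -> R) :
  realization (susp_wedge J K) w ->
  in_simplex [fset None]%fset w \/
  exists i s k, [/\ i \in J, K i s & in_simplex (susp_face i s k) w].
Proof.
case/realizationP=> T [sub|[i [s [k [iJ Ks ->]]]]] Tw; last by right; exists i, s, k.
left; case: Tw => w0 wge0 w1; split=> // [u uN|].
  by apply: w0; apply: contra uN; apply: (fsubsetP sub).
by rewrite -(big_fset_incl _ sub) // => u _ /w0.
Qed.

Definition south_poles (J : {fset I}) : {fset W} := [fset Some (i, inr false) | i in J]%fset.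

Lemma south_polesP J u :
  reflect (exists2 i, i \in J & u = Some (i, inr false)) (u \in south_poles J).
Proof. exact: imfsetP. Qed.

Lemma in_south_poles J i x : (Some (i, x) \in south_poles J) = (x == inr false) && (i \in J).
Proof.
apply/south_polesP/andP => [[j jJ [-> ->]] // | [/eqP-> iJ]]; by exists i.
Qed.

Lemma None_notin_south_poles J : None \notin south_poles J.
Proof. by apply/south_polesP => -[]. Qed.

Lemma susp_wedge_foldable (J : {fset I}) (K : I -> complex V) :
  foldable (susp_wedge J K) None (south_poles J).
Proof.
have in_apex (T : {fset W}) : (T `<=` [fset None])%fset -> forall u, u \in T -> u = None.
  by move=> sub u /(fsubsetP sub); rewrite inE => /eqP.
split.
- exact: None_notin_south_poles.
- move=> T _ _ [sub|[q [s [k [_ _ ->]]]]] /south_polesP[p _ ->] /south_polesP[p' _ ->].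
    by move=> /(in_apex _ sub).
  by rewrite !in_susp_face => /andP[/eqP-> _] /andP[/eqP-> _].
- move=> T _ [sub|[q [s [k [_ _ ->]]]]] /south_polesP[p _ ->]; first by move=> /(in_apex _ sub).
  by rewrite !in_susp_face => /andP[_ /eqP->].
- move=> T [sub|[q [s [k [qJ Ks ->]]]]] nS.
    by left; rewrite fsubUset fsub1set inE eqxx.
  have := nS (Some (q, inr false)); rewrite in_south_poles eqxx qJ in_susp_face eqxx => /(_ isT) kS.
  right; exists q, s, (Some true); split=> //; apply/fsetP => -[[p [x|[]]]|];
    by case: k {nS} kS => [[]|] // _; rewrite in_fset1U !in_susp_face ?option_sum_eqE.
- move=> T _ [sub|[q [s [k [qJ Ks ->]]]]] /south_polesP[p _ ->]; first by move=> /(in_apex _ sub).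
  rewrite in_susp_face => /andP[/eqP-> /eqP->].
  right; exists q, s, (Some true); split=> //; apply/fsetP => -[[p' [x|[]]]|];
    by rewrite in_fset1U in_fsetD1 !in_susp_face ?option_sum_eqE ?andbF //=; case: (p' == q).
Qed.

End susp_wedge.

Section anti_Rips.
Context {R : realType} (r : R).
Implicit Types (P S : {fset R}) (p q : R).

Lemma AR_subset P S S' : AR r P S -> (S' `<=` S)%fset -> AR r P S'.
Proof.
case=> SP Sfar S'S; split; first exact: fsubset_trans S'S SP.
by move=> p q pS' qS'; apply: Sfar; apply: (fsubsetP S'S).
Qed.

Lemma AR_superset P P' S : (P `<=` P')%fset -> AR r P S -> AR r P' S.
Proof. by move=> PP' [SP Sfar]; split=> //; exact: fsubset_trans PP'. Qed.

Lemma AR_fset1U P S c : AR r P S -> c \in P ->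
  (forall q, q \in S -> q != c -> r < `|q - c|) -> AR r P (c |` S)%fset.
Proof.
case=> SP Sfar cP cfar; split.
  by apply/fsubsetP => v /fset1UP[->|/(fsubsetP SP)].
move=> p q /fset1UP[->|pS] /fset1UP[->|qS]; rewrite ?eqxx //.
- by move=> cq; rewrite distrC; apply: cfar => //; rewrite eq_sym.
- exact: cfar.
- exact: Sfar.
Qed.

Variables (P : {fset R}) (m : R).
Hypotheses (mP : m \in P) (m_min : forall p, p \in P -> m <= p).

Local Notation J := [fset p in P | (m < p <= m + r)%R]%fset.

Lemma in_near_min p : p \in J -> [/\ p \in P, m < p & p <= m + r].
Proof. by rewrite !inE /= => /andP[-> /andP[-> ->]]. Qed.

Lemma AR_far_right p q : p \in J -> q \in P -> r < `|q - p| -> p + r < q.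
Proof. by move=> /in_near_min[_ mp pmr] /m_min mq; rewrite ltr_normr => /orP[|]; lra. Qed.

Lemma AR_foldable : foldable (AR r P) m J.
Proof.
split.
- by rewrite !inE ltxx andbF.
- move=> S a a' [_ Sfar] aJ a'J aS a'S; apply/eqP; apply: contraT => aa'.
  have := Sfar a a' aS a'S aa'.
  case/in_near_min: aJ => _ ma amr; case/in_near_min: a'J => _ ma' a'mr.
  by rewrite ltr_normr => /orP[|]; lra.
- move=> S a [_ Sfar] aJ aS; apply/negP => mS; case/in_near_min: (aJ) => _ ma amr.
  by have := Sfar a m aS mS (negbT (gt_eqF ma)); rewrite ltr_normr => /orP[|]; lra.
- move=> S FS nJ; apply: AR_fset1U => // q qS qm; case: (FS) => SP _.
  have qP := fsubsetP SP q qS; have mq : m < q by rewrite lt_def qm m_min.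
  have : q \notin J by apply/negP => /nJ; rewrite qS.
  by rewrite !inE qP mq /= -ltNge => mrq; rewrite gtr0_norm; lra.
- move=> S a FS aJ aS; apply: AR_fset1U => //; first exact: AR_subset FS (fsubsetDl _ _).
  move=> q /fsetD1P[qa qS] _; case: (FS) => SP Sfar.
  have := AR_far_right aJ (fsubsetP SP q qS) (Sfar q a qS aS qa); case/in_near_min: aJ => _ ma _.
  by move=> aq; rewrite ltr_normr; apply/orP; left; lra.
Qed.

End anti_Rips.

Section wedge_maps.
Context {R : realType} (r : R) (P : {fset R}) (m : R).
Hypotheses (r0 : 0 <= r) (mP : m \in P) (m_min : forall p, p \in P -> m <= p).

Local Notation J := [fset p in P | (m < p <= m + r)%R]%fset.
Local Notation Q p := [fset q in P | (p + r < q)%R]%fset.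
Local Notation W := (option (R * (R + bool))).
Local Notation KW := (susp_wedge J (fun p => AR r (Q p))).

Lemma in_beyond p q : q \in Q p -> q \in P /\ p + r < q.
Proof. by rewrite !inE /= => /andP[]. Qed.

Lemma link_vertex p q : p \in J -> q \in Q p -> [/\ q != m, q \notin J & q != p].
Proof.
move=> /in_near_min[_ mp pmr] /in_beyond[qP pq]; split.
- by apply/eqP => qm; lra.
- by rewrite !inE qP /= negb_and -!ltNge; apply/orP; right; lra.
- by apply/eqP => qp; lra.
Qed.

Lemma AR_link S a : AR r P S -> a \in J -> a \in S -> AR r (Q a) (S `\ a)%fset.
Proof.
case=> SP Sfar aJ aS; split; last by move=> p q /fsetD1P[_ pS] /fsetD1P[_ qS]; exact: Sfar.
apply/fsubsetP => q /fsetD1P[qa qS]; have qP := fsubsetP SP q qS.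
by rewrite !inE qP /= (AR_far_right m_min aJ qP (Sfar q a qS aS qa)).
Qed.

(* The weights are chosen so that [from_wedge \o to_wedge] is the end of the
   fold of AR_r(P); on the link of p they are scaled by [spread0 (t p)] and thus
   vanish with [t p]. *)
Definition to_wedge (t : R -> R) : W -> R := fun u =>
  match u with
  | None => Num.max (- pivot0 (pivot_mass J t)) 0
  | Some (p, inr false) => if p \in J then Num.max (2 * t p - 1) 0 else 0
  | Some (_, inr true) => 0
  | Some (p, inl q) => if (p \in J) && (q \in Q p) then t q * spread0 (t p) else 0
  end.

Definition from_wedge (w : W -> R) : R -> R := fun v =>
  (if v == m then w None else 0) + (if v \in J then w (Some (v, inr false)) else 0)
  + \sum_(p <- J) w (Some (p, inl v)).

Lemma to_wedge_continuous :
  continuous (fun t : {ptws R -> R} => (to_wedge t : {ptws W -> R})).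
Proof.
have coord q : continuous (fun t : {ptws R -> R} => t q) := @proj_continuous R (fun=> R) q.
have zero := cst_continuous (T := {ptws R -> R}) (x := (0 : R)).
apply: continuous_ptws => -[[p [q|[]]]|]; rewrite /to_wedge.
- case: (_ && _); last exact: zero.
  exact: continuous_mul (coord q) (spread0_continuous (coord p)).
- exact: zero.
- case: (p \in J); last exact: zero.
  have twice := continuous_mul (cst_continuous (x := (2 : R))) (coord p).
  exact: continuous_maxr (continuous_add twice (cst_continuous (x := (- 1 : R)))) zero.
- have mass : continuous (fun t : {ptws R -> R} => pivot_mass J t) by exact: continuous_sum.
  exact: continuous_maxr (continuous_opp (pivot0_continuous mass)) zero.
Qed.

Lemma from_wedge_continuous :
  continuous (fun w : {ptws W -> R} => (from_wedge w : {ptws R -> R})).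
Proof.
have coord u : continuous (fun w : {ptws W -> R} => w u) := @proj_continuous W (fun=> R) u.
have zero := cst_continuous (T := {ptws W -> R}) (x := (0 : R)).
apply: continuous_ptws => v; rewrite /from_wedge.
apply: continuous_add; last exact: continuous_sum.
by apply: continuous_add; [case: (v == m) | case: (v \in J)]; (exact: coord || exact: zero).
Qed.

Lemma to_wedge_ge0 t : (forall v, 0 <= t v) -> forall u, 0 <= to_wedge t u.
Proof.
move=> tge0 [[p [q|[]]]|] /=; rewrite ?le_max ?lexx ?orbT //.
- by case: ifP => // _; rewrite mulr_ge0 ?spread0_ge0.
- by case: ifP => // _; rewrite le_max lexx orbT.
Qed.

Lemma to_wedge_realization_nopivot t S : in_simplex S t -> (forall a, a \in J -> a \notin S) ->
  pivot_mass J t = 0 -> realization KW (to_wedge t).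
Proof.
case=> t0 tge0 _ nJ m0; apply/realizationP; exists [fset None]%fset; first by left.
have tJ p : p \in J -> t p = 0 by move=> /nJ /t0.
split; [move=> [[p [q|[]]]|] | exact: to_wedge_ge0 |]; rewrite ?inE //=.
- by case: (boolP (p \in J)) => //= /tJ ->; rewrite spread0_b0 mulr0; case: ifP.
- by case: ifP => // /tJ -> _; apply/max_idPr; lra.
by rewrite big_seq_fset1 /= m0 pivot0_b0 opprK; apply/max_idPl; lra.
Qed.

Lemma to_wedge_realization_pivot t S a : AR r P S -> in_simplex S t -> a \in J -> a \in S ->
  pivot_mass J t = t a -> (forall v, v \in S -> v != a -> v != m /\ v \notin J) ->
  realization KW (to_wedge t).
Proof.
move=> KS St aJ aS ma other; case: (St) => t0 tge0 _.
have a01 : 0 <= t a <= 1 by rewrite tge0 (in_simplex_le1 a St).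
have tJ p : p \in J -> p != a -> t p = 0.
  by move=> pJ pa; apply: t0; apply: contraL pJ => pS; case: (other p pS pa).
have tQ q : q \in Q a -> q \notin (S `\ a)%fset -> t q = 0.
  move=> /in_beyond[_ aq]; rewrite in_fsetD1 negb_and negbK => /orP[/eqP qa|/t0 //].
  by move: aq; rewrite qa gtrDl ltNge r0.
have link := AR_link KS aJ aS; case: (link) => linkQ _.
pose k := if 2^-1 <= t a then Some false else Some true.
apply/realizationP; exists (susp_face a (S `\ a)%fset k).
  by right; exists a, (S `\ a)%fset, k.
split; [move=> [[p [q|[]]]|] | exact: to_wedge_ge0 |]; rewrite ?in_susp_face /=.
- case: (eqVneq p a) => [-> /= qS | pa _].
    by rewrite aJ; case: ifP => // /tQ ->; rewrite ?mul0r.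
  by case: (boolP (p \in J)) => //= pJ; rewrite (tJ p pJ pa) spread0_b0 mulr0; case: ifP.
- by [].
- case: (eqVneq p a) => [-> /= | pa _].
    by rewrite aJ /k; case: ifP => // ? _; apply/max_idPr; lra.
  by case: ifP => // pJ; rewrite (tJ p pJ pa); apply/max_idPr; lra.
- rewrite /k ma; case: ifP => // ? _; rewrite pivot0_large //; apply/max_idPr; lra.
rewrite big_susp_face big_seq (eq_bigr (fun q => t q * spread0 (t a))); last first.
  by move=> q /(fsubsetP linkQ) qQ; rewrite /= aJ qQ.
rewrite -big_seq -mulr_suml (in_simplex_sumD1 a St) /k /spread0; case: ifP => ta /=;
  rewrite big_seq_fset1 /= ?aJ ?ma.
- by rewrite (min_idPr _) ?(max_idPl _); lra.
- rewrite pivot0_small ?(min_idPl _) ?(max_idPl _); first ring.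
  + by rewrite opprK -expr2 sqr_ge0.
  + lra.
  + by rewrite tge0; lra.
Qed.

Lemma to_wedge_realization t : realization (AR r P) t -> realization KW (to_wedge t).
Proof.
move=> Kt; case: (pivotP (AR_foldable r mP m_min) Kt).
  by move=> S _ St nJ m0; exact: to_wedge_realization_nopivot St nJ m0.
by move=> S a KS St aJ aS _ ma other; exact: to_wedge_realization_pivot KS St aJ aS ma other.
Qed.

Lemma from_wedge_on_apex w : in_simplex [fset None]%fset w ->
  forall v, from_wedge w v = if v == m then 1 else 0.
Proof.
case=> w0 _; rewrite big_seq_fset1 => wN.
have wS p x : w (Some (p, x)) = 0 by apply: w0; rewrite inE.
by move=> v; rewrite /from_wedge wN !wS if_same addr0 big1 ?addr0.
Qed.

Lemma from_wedge_on_face p s k w : p \in J -> in_simplex (susp_face p s k) w -> forall v,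
  from_wedge w v = (if v == m then w None else 0) +
    (if v == p then w (Some (p, inr false)) else 0) + (if v \in s then w (Some (p, inl v)) else 0).
Proof.
move=> pJ [w0 _ _] v; rewrite /from_wedge; congr (_ + _ + _).
  case: (eqVneq v p) => [->|vp]; first by rewrite pJ.
  by case: ifP => // _; apply: w0; rewrite in_susp_face (negbTE vp).
rewrite (big_fsetD1 p pJ) /= big1_fset ?addr0.
  by case: ifP => // vs; apply: w0; rewrite in_susp_face eqxx vs.
by move=> p' /fsetD1P[p'p _] _; apply: w0; rewrite in_susp_face (negbTE p'p).
Qed.

Lemma from_wedge_ge0 w : (forall u, 0 <= w u) -> forall v, 0 <= from_wedge w v.
Proof.
move=> wge0 v; rewrite /from_wedge !addr_ge0 ?sumr_ge0 //.
- by case: ifP.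
- by case: ifP.
Qed.

Lemma from_wedge_realization_face w p s k : p \in J -> AR r (Q p) s ->
  in_simplex (susp_face p s k) w -> realization (AR r P) (from_wedge w).
Proof.
move=> pJ [sQ sfar] w_face; case: (w_face) => w0 wge0 w1.
have gge0 := from_wedge_ge0 wge0; apply/realizationP.
case/in_near_min: (pJ) => pP mp _.
have s_far q : q \in s -> p + r < q by move=> /(fsubsetP sQ) /in_beyond[].
have ps : p \notin s by apply/negP => /s_far; move: r0; lra.
have ms : m \notin s by apply/negP => /s_far; move: r0; lra.
have g := from_wedge_on_face pJ w_face.
have wN : k != Some true -> w None = 0 by move=> kN; apply: w0; rewrite in_susp_face.
have wS : k != Some false -> w (Some (p, inr false)) = 0.
  by move=> kS; apply: w0; rewrite in_susp_face eqxx.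
have gs : \sum_(q <- s) from_wedge w q = \sum_(q <- s) w (Some (p, inl q)).
  rewrite big_seq [RHS]big_seq; apply: eq_bigr => q qs.
  have [qm _ qp] := link_vertex pJ (fsubsetP sQ q qs).
  by rewrite g qs (negbTE qm) (negbTE qp) !add0r.
pose c := if k == Some false then p else m.
have cs : c \notin s by rewrite /c; case: ifP.
have gc : from_wedge w c = \sum_(u <- pole_face p k) w u.
  rewrite /c; case kE: k => [[]|] /=; rewrite g ?(negbTE ps) ?(negbTE ms);
    rewrite ?big_seq_fset1 ?big_seq_fset0 ?eqxx ?(gt_eqF mp) ?(lt_eqF mp) ?addr0 ?add0r //.
  by rewrite wN ?kE.
exists (c |` s)%fset.
  apply: AR_fset1U; first by apply: AR_superset (conj sQ sfar); apply/fsubsetP => q /in_beyond[].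
    by rewrite /c; case: ifP.
  move=> q /s_far pq _; have cp : c <= p by rewrite /c; case: ifP => // _; exact: m_min.
  by rewrite ltr_normr; apply/orP; left; lra.
split=> // [v|].
  rewrite in_fset1U negb_or => /andP[vc /negbTE vs]; rewrite g vs addr0.
  move: vc; rewrite /c; case: ifP => [/eqP kS vp | /negbT kS vm].
    by rewrite (negbTE vp) wN ?kS // addr0; case: ifP.
  by rewrite (negbTE vm) wS // add0r; case: ifP.
by move: w1; rewrite big_susp_face big_fsetU1 //= gc gs addrC.
Qed.

Lemma from_wedge_realization w : realization KW w -> realization (AR r P) (from_wedge w).
Proof.
move=> KWw; case: (susp_wedge_realizationP KWw) => [wN | [p [s [k [pJ Ks w_face]]]]].
  have gge0 : forall v, 0 <= from_wedge w v by case: wN => _ /from_wedge_ge0.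
  apply/realizationP; exists [fset m]%fset.
    by split=> [|x y /fset1P-> /fset1P->]; rewrite ?eqxx // fsub1set.
  split=> // [v|]; first by rewrite inE from_wedge_on_apex // => /negbTE ->.
  by rewrite big_seq_fset1 from_wedge_on_apex // eqxx.
exact: from_wedge_realization_face pJ Ks w_face.
Qed.

Lemma from_to_wedge t : realization (AR r P) t -> from_wedge (to_wedge t) = fold m J t 0.
Proof.
move=> Kt; have Kfold := AR_foldable r mP m_min.
have /andP[m0 _] := pivot_mass_bounds Kfold Kt.
have no_link v : (v == m) || (v \in J) -> \sum_(p <- J) to_wedge t (Some (p, inl v)) = 0.
  move=> vmJ; rewrite big1_fset // => p pJ _ /=; rewrite pJ /=.
  by case: ifP => // /(link_vertex pJ)[vm vJ _]; move: vmJ; rewrite (negbTE vm) (negbTE vJ).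
apply: funext => v; rewrite /fold /from_wedge !pivot_s0 mul0r addr0.
case: (eqVneq v m) => [->|vm].
  by rewrite (negbTE (apex_notin_pivots Kfold)) no_link ?eqxx // !addr0.
case: ifP => [vJ | /negbT vJ].
  by rewrite no_link ?vJ ?orbT // add0r addr0 /= vJ pivot0_pos.
rewrite !add0r spread_s0 //.
case: (pivotP Kfold Kt) => [S _ [t0 _ _] nJ -> | S a [SP Sfar] [t0 _ _] aJ aS _ -> other].
  rewrite spread0_b0 mul0r big1_fset // => p pJ _ /=.
  by rewrite pJ (t0 p (nJ p pJ)) spread0_b0 mulr0; case: ifP.
have tJ p : p \in J -> p != a -> t p = 0.
  by move=> pJ pa; apply: t0; apply: contraL pJ => pS; case: (other p pS pa).
rewrite (big_fsetD1 a aJ) /= big1_fset ?addr0 => [|p /fsetD1P[pa pJ] _]; last first.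
  by rewrite /= pJ (tJ p pJ pa) spread0_b0 mulr0; case: ifP.
rewrite aJ /=; case: ifP => [_ | /negbT vQ]; first by rewrite mulrC.
rewrite (t0 v) ?mulr0 //; apply: contraNN vQ => vS; have vP := fsubsetP SP v vS.
have va : v != a by apply: contraNneq vJ => ->.
by rewrite !inE /= vP (AR_far_right m_min aJ vP (Sfar v a vS aS va)).
Qed.

Lemma to_from_wedge_apex w : in_simplex [fset None]%fset w ->
  to_wedge (from_wedge w) = fold None (south_poles J) w 0.
Proof.
move=> wN; have g := from_wedge_on_apex wN; case: (wN) => w0 _ _.
have wS q x : w (Some (q, x)) = 0 by apply: w0; rewrite inE.
have gJ q : q \in J -> from_wedge w q = 0.
  have mJ := apex_notin_pivots (AR_foldable r mP m_min).
  by move=> qJ; rewrite g; case: eqP qJ => // ->; rewrite (negbTE mJ).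
have massS : pivot_mass (south_poles J) w = 0.
  by rewrite /pivot_mass big1_fset // => u /south_polesP[q _ ->].
have massJ : pivot_mass J (from_wedge w) = 0 by rewrite /pivot_mass big1_fset // => q /gJ.
apply: funext => -[[q [x|[]]]|];
  rewrite /fold !pivot_s0 mul0r addr0 /= ?option_sum_eqE ?in_south_poles /=.
- by rewrite wS mulr0; case: ifP => // /andP[/gJ -> _]; rewrite spread0_b0 mulr0.
- by rewrite wS mulr0.
- case: ifP => qJ; last by rewrite wS mulr0.
  by rewrite gJ // wS pivot0_pos.
- by rewrite massS massJ.
Qed.

Lemma to_from_wedge_face w p s k : p \in J -> AR r (Q p) s -> in_simplex (susp_face p s k) w ->
  to_wedge (from_wedge w) = fold None (south_poles J) w 0.
Proof.
move=> pJ [sQ _] w_face; have g := from_wedge_on_face pJ w_face; case: (w_face) => w0 wge0 _.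
have mJ := apex_notin_pivots (AR_foldable r mP m_min).
have wq q x : q != p -> w (Some (q, x)) = 0.
  by move=> qp; apply: w0; case: x => [y|[]]; rewrite in_susp_face ?(negbTE qp).
have wN q : w (Some (q, inr true)) = 0 by apply: w0; rewrite in_susp_face.
have gJ q : q \in J -> from_wedge w q = w (Some (q, inr false)).
  move=> qJ; have qs : q \notin s by apply: contraL qJ => /(fsubsetP sQ) /(link_vertex pJ) [].
  rewrite g (negbTE qs) addr0; case: eqP qJ mJ => [-> -> //|_ _ _]; rewrite add0r.
  by case: (eqVneq q p) => [-> // | qp]; rewrite wq.
have gQ q : q \in Q p -> from_wedge w q = w (Some (p, inl q)).
  move=> qQ; have [qm _ qp] := link_vertex pJ qQ.
  rewrite g (negbTE qm) (negbTE qp) !add0r; case: ifP => // /negbT qs.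
  by rewrite w0 // in_susp_face eqxx (negbTE qs).
have southJ : \sum_(q <- J) w (Some (q, inr false)) = w (Some (p, inr false)).
  by rewrite (big_fsetD1 p pJ) /= big1_fset ?addr0 // => q /fsetD1P[qp _] _; rewrite wq.
have massS : pivot_mass (south_poles J) w = w (Some (p, inr false)).
  by rewrite /pivot_mass big_imfset //= => x y _ _ [].
have massJ : pivot_mass J (from_wedge w) = w (Some (p, inr false)).
  by rewrite -southJ /pivot_mass big_seq [RHS]big_seq; apply: eq_bigr => q /gJ.
apply: funext => -[[q [x|[]]]|];
  rewrite /fold !pivot_s0 mul0r addr0 /= ?option_sum_eqE ?in_south_poles /=.
- rewrite massS spread_s0 //; case: (eqVneq q p) => [-> | qp]; last first.
    rewrite (wq q _ qp) mulr0; case: ifP => // /andP[/gJ -> _].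
    by rewrite (wq q _ qp) spread0_b0 mulr0.
  rewrite pJ /=; case: ifP => [xQ | /negbT xQ]; first by rewrite gQ // gJ // mulrC.
  rewrite (w0 (Some (p, inl x))) ?mulr0 // in_susp_face eqxx /=.
  by apply: contra xQ; exact: (fsubsetP sQ).
- by rewrite wN mulr0.
- case: ifP => qJ; first by rewrite gJ // pivot0_pos.
  by rewrite wq ?mulr0 //; apply: contraFneq qJ => ->.
- by rewrite massS massJ.
Qed.

Lemma to_from_wedge w : realization KW w -> to_wedge (from_wedge w) = fold None (south_poles J) w 0.
Proof.
case/susp_wedge_realizationP => [|[p [s [k [pJ Ks w_face]]]]]; first exact: to_from_wedge_apex.
exact: to_from_wedge_face pJ Ks w_face.
Qed.

End wedge_maps.

Theorem proposition4p2 (R : realType) (r : R) (P : {fset R}) (m : R) :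
  0 <= r -> m \in P -> (forall p, p \in P -> m <= p) ->
  homotopy_equiv R (realization (R := R) (AR r P))
    (realization (R := R)
       (wedge [fset p in P | (m < p <= m + r)%R]%fset (inr true)
          (fun p => susp (AR r [fset q in P | (p + r < q)%R]%fset)))).
Proof.
move=> r0 mP m_min; rewrite wedge_suspE.
exists (to_wedge r P m), (from_wedge r P m).
split; first exact/continuous_subspaceT/to_wedge_continuous.
split; first exact/continuous_subspaceT/from_wedge_continuous.
split; first by move=> t; exact: to_wedge_realization.
split; first by move=> w; exact: from_wedge_realization.
split.
  apply: (fold_homotopic (AR_foldable r mP m_min)) => t Kt /=.
  exact: from_to_wedge.
apply: (fold_homotopic (susp_wedge_foldable _ _)) => w KWw /=.
exact: to_from_wedge.
Qed.
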